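(* (1) For $0\le t\le2$, $\mathfrak{e}^C_t\in\mathcal{E}(\mathcal{P}^{s+}_{3,5})$. (2) If $0<t\le2$, $t\ne1$, and $f\in\mathcal{P}^{s+}_{3,5}$ satisfies $f(t,1,1)=f(1,1,1)=f(0,1,1)=0$, then $f=\lambda\mathfrak{e}^C_t$ for some $\lambda\ge0$. (3) If $f\in\mathcal{P}^{s+}_{3,5}$ satisfies $f(1,1,1)=f(0,1,1)=f_a(0,1,1)=f_{aa}(0,1,1)=0$, then $f=\lambda\mathfrak{e}^C_0$ for some $\lambda\ge0$. (4) If $f\in\mathcal{P}^{s+}_{3,5}$ satisfies $f(0,1,1)=f(1,1,1)=f_{aa}(1,1,1)=0$, then $f=\lambda\mathfrak{e}^C_1$ for some $\lambda\ge0$.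
   Context: Let $a,b,c$ be variables. For nonnegative integers $m,n$ put $S_{m,n}=a^mb^n+b^mc^n+c^ma^n$, $S_n=S_{n,0}=a^n+b^n+c^n$, $T_{m,n}=S_{m,n}+S_{n,m}$, $U=abc$ (so $S_{1,1}=ab+bc+ca$). Let $\mathcal{H}^s_{3,5}$ be the real vector space of symmetric homogeneous polynomials of degree 5 in $\mathbb{R}[a,b,c]$; it has basis $s_0=S_5-US_{1,1}$, $s_1=T_{4,1}-2US_{1,1}$, $s_2=T_{3,2}-2US_{1,1}$, $s_3=US_2-US_{1,1}$, $s_4=US_{1,1}$. Let $\mathcal{P}^{s+}_{3,5}=\{f\in\mathcal{H}^s_{3,5}: f(a,b,c)\ge 0\text{ for all }a,b,c\ge0\}$. For a closed convex cone $\mathcal{P}$, an element $f\in\mathcal{P}\setminus\{0\}$ is extremal if whenever $f=g+h$ with $g,h\in\mathcal{P}$ we have $g,h\in\mathbb{R}_{\ge0}f$; $\mathcal{E}(\mathcal{P})$ is the set of extremal elements. Subscripts denote partial derivatives: $f_a=\partial f/\partial a$, $f_{aa}=\partial^2f/\partial a^2$, $f_{ab}=\partial^2f/\partial a\partial b$, etc. Family C: $\mathfrak{e}^C_t=s_0-(t+1)s_1+ts_2+(t+1)^2s_3$. *)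

From HB Require Import structures.
From mathcomp Require Import all_boot all_order all_algebra.
From mathcomp Require Import reals.
From mathcomp Require Import mpoly.
Set Implicit Arguments. Unset Strict Implicit. Unset Printing Implicit Defensive.
Import Order.TTheory GRing.Theory Num.Theory.
Local Open Scope ring_scope.

Section Defs.
Variable R : realType.

Definition va : {mpoly R[3]} := 'X_(0 : 'I_3).
Definition vb : {mpoly R[3]} := 'X_(1 : 'I_3).
Definition vc : {mpoly R[3]} := 'X_(2 : 'I_3).

Definition Smn (m n : nat) : {mpoly R[3]} :=
  va ^+ m * vb ^+ n + vb ^+ m * vc ^+ n + vc ^+ m * va ^+ n.
Definition Sn (n : nat) : {mpoly R[3]} := Smn n 0.
Definition Tmn (m n : nat) : {mpoly R[3]} := Smn m n + Smn n m.
Definition U3 : {mpoly R[3]} := va * vb * vc.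

(* basis of H^s_{3,5} *)
Definition s0 : {mpoly R[3]} := Sn 5 - U3 * Smn 1 1.
Definition s1 : {mpoly R[3]} := Tmn 4 1 - 2%:R * U3 * Smn 1 1.
Definition s2 : {mpoly R[3]} := Tmn 3 2 - 2%:R * U3 * Smn 1 1.
Definition s3 : {mpoly R[3]} := U3 * Sn 2 - U3 * Smn 1 1.
Definition s4 : {mpoly R[3]} := U3 * Smn 1 1.

Definition eC (t : R) : {mpoly R[3]} :=
  s0 - (t + 1) *: s1 + t *: s2 + ((t + 1) ^+ 2) *: s3.

Definition ev3 (f : {mpoly R[3]}) (x y z : R) : R := f.@[fun i : 'I_3 => nth 0 [:: x; y; z] i].

Definition d_a (f : {mpoly R[3]}) : {mpoly R[3]} := f^`M((0 : 'I_3)).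
Definition d_aa (f : {mpoly R[3]}) : {mpoly R[3]} := d_a (d_a f).

Definition Hs35 (f : {mpoly R[3]}) : Prop :=
  f \is symmetric /\ f \is 5.-homog.

Definition Ps35 (f : {mpoly R[3]}) : Prop :=
  Hs35 f /\ forall x y z : R, 0 <= x -> 0 <= y -> 0 <= z -> 0 <= ev3 f x y z.

Definition extremal (P : {mpoly R[3]} -> Prop) (f : {mpoly R[3]}) : Prop :=
  P f /\ f != 0 /\
  forall g h, P g -> P h -> f = g + h ->
    (exists l : R, 0 <= l /\ g = l *: f) /\ (exists l : R, 0 <= l /\ h = l *: f).

End Defs.

From mathcomp Require Import all_boot all_order all_algebra fingroup perm.
From mathcomp Require Import reals mpoly.
From mathcomp Require Import ring lra.
Import Order.TTheory GRing.Theory Num.Theory.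
Local Open Scope ring_scope.
Set Implicit Arguments. Unset Strict Implicit. Unset Printing Implicit Defensive.

(* Nonnegativity: after sorting [a >= b >= c] and writing [a = c + q + d],
   [b = c + q], the form e^C_t is a nonnegative term plus [c] times a quadratic
   in [c] with nonnegative outer coefficients and nonpositive discriminant; the
   certificate differs for [t <= 1] and [t >= 1].

   Rigidity: a symmetric quintic is determined by five coefficients, and these
   are determined in turn by the restriction [x |-> f(x, 1, 1)].  For [f] in the
   cone this restriction is nonnegative on [x >= 0], so its zeros at [1] and [t]
   are double; with the zero at [0] this leaves only the multiples of
   e^C_t(x, 1, 1) = x (x - 1)^2 (x - t)^2.  At [t = 0] and [t = 1] the missing
   conditions come from the derivative hypotheses (a triple root at [1] is in
   fact a quadruple one).  Extremality follows because both summands of e^C_t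
   are nonnegative, hence inherit its zeros and vanishing derivatives on that line. *)

Lemma ord3P (i : 'I_3) : [\/ i = 0, i = 1 | i = 2].
Proof.
by case: i => [[|[|[|//]]] lti]; [apply: Or31 | apply: Or32 | apply: Or33]; apply/val_inj.
Qed.

Section Quintic.
Variable A : comPzRingType.

Definition quintic (a1 a2 a3 a4 a5 x y z : A) : A :=
  a1 * (x^+5 + y^+5 + z^+5)
+ a2 * (x^+4*y + x^+4*z + y^+4*x + y^+4*z + z^+4*x + z^+4*y)
+ a3 * (x^+3*y^+2 + x^+3*z^+2 + y^+3*x^+2 + y^+3*z^+2 + z^+3*x^+2 + z^+3*y^+2)
+ a4 * (x*y*z*(x^+2 + y^+2 + z^+2))
+ a5 * (x*y*z*(x*y + y*z + z*x)).

Lemma quinticC12 (a1 a2 a3 a4 a5 x y z : A) :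
  quintic a1 a2 a3 a4 a5 y x z = quintic a1 a2 a3 a4 a5 x y z.
Proof. rewrite /quintic; ring. Qed.

Lemma quinticC23 (a1 a2 a3 a4 a5 x y z : A) :
  quintic a1 a2 a3 a4 a5 x z y = quintic a1 a2 a3 a4 a5 x y z.
Proof. rewrite /quintic; ring. Qed.

Lemma quintic_perm (a1 a2 a3 a4 a5 : A) (g : 'I_3 -> A) (s : 'S_3) :
  quintic a1 a2 a3 a4 a5 (g (s 0)) (g (s 1)) (g (s 2))
  = quintic a1 a2 a3 a4 a5 (g 0) (g 1) (g 2).
Proof.
have sI := @perm_inj _ s.
case: (ord3P (s 0)) => s0; case: (ord3P (s 1)) => s1; case: (ord3P (s 2)) => s2;
  rewrite s0 s1 s2 //;
  try by [have := sI _ _ (etrans s0 (esym s1)) | have := sI _ _ (etrans s0 (esym s2))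
        | have := sI _ _ (etrans s1 (esym s2))].
all: rewrite /quintic; ring.
Qed.

End Quintic.

Lemma rmorph_quintic (A B : comPzRingType) (f : {rmorphism A -> B})
    (a1 a2 a3 a4 a5 x y z : A) : f (quintic a1 a2 a3 a4 a5 x y z)
  = quintic (f a1) (f a2) (f a3) (f a4) (f a5) (f x) (f y) (f z).
Proof. by rewrite /quintic !(rmorphD, rmorphM, rmorphXn). Qed.

Section Nonnegativity.
Variable R : realFieldType.

Definition eCq (t x y z : R) : R :=
  quintic 1 (-(t + 1)) t ((t + 1)^+2) (-(t^+2 + 2*t)) x y z.

Lemma quadratic_ge0 (a b c z : R) :
  0 <= a -> 0 <= c -> b^+2 <= 4*a*c -> 0 <= a*z^+2 + b*z + c.
Proof.
move=> a0 c0 disc; have [a_eq0|an0] := eqVneq a 0.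
  rewrite a_eq0 in disc *.
  have -> : b = 0 by apply/eqP; rewrite -sqrf_eq0 eq_le sqr_ge0 andbT; lra.
  lra.
have a_gt0 : 0 < a by rewrite lt_def an0.
have : 0 <= 4*a*(a*z^+2 + b*z + c).
  have -> : 4*a*(a*z^+2 + b*z + c) = (2*a*z + b)^+2 + (4*a*c - b^+2) by ring.
  by apply: addr_ge0; [exact: sqr_ge0 | lra].
by rewrite pmulr_rge0 // mulr_gt0.
Qed.

Lemma eCq_sorted_le1 t q d z : 0 <= q -> 0 <= d -> 0 <= z -> 0 <= t <= 1 ->
  0 <= eCq t (z + q + d) (z + q) z.
Proof.
move=> q0 d0 z0 /andP[t0 t1].
have w0 : 0 <= 2*q + d by lra.
have s0 : 0 <= d^+2 := sqr_ge0 d.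
have k0 : 0 <= (q + d)*q by apply: mulr_ge0 => //; lra.
set w := 2*q + d in w0 *; set s := d^+2 in s0 *; set k := (q + d)*q in k0 *.
pose c2 := (t - 1)^+2 * (s + k).
pose c1 := (t - 1) * w * ((t - 3)*s + t*k).
pose c0 := (3 - 2*t)*s^+2 + (t^+2 - 8*t + 9)*s*k + t^+2*k^+2.
have -> : eCq t (z + q + d) (z + q) z = w*s*(s + (2 - t)*k) + z*(c2*z^+2 + c1*z + c0).
  by rewrite /eCq /quintic /c2 /c1 /c0 /w /s /k; ring.
have disc : 4*c2*c0 - c1^+2 = (t - 1)^+2 * (s * (s^+2*(1 - t)*(3 + t)
    + 2*s*k*(1 - t)*(t + 6) + k^+2*(36 - 8*t - t^+2))).
  by rewrite /c2 /c1 /c0 /w /s /k; ring.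
(* [lra] fails when the context holds local definitions *)
subst c0 c1 c2; clearbody w s k.
apply: addr_ge0.
  by apply: mulr_ge0; [exact: mulr_ge0 | apply: addr_ge0 => //; apply: mulr_ge0 => //; lra].
apply: mulr_ge0 => //; apply: quadratic_ge0.
- exact: mulr_ge0 (sqr_ge0 _) (addr_ge0 s0 k0).
- apply: addr_ge0; first apply: addr_ge0.
  + by apply: mulr_ge0; [lra | exact: sqr_ge0].
  + by apply: mulr_ge0 => //; apply: mulr_ge0 => //; nra.
  + exact: mulr_ge0 (sqr_ge0 _) (sqr_ge0 _).
- rewrite -subr_ge0 disc; apply: mulr_ge0; first exact: sqr_ge0.
  apply: mulr_ge0 => //; apply: addr_ge0; first apply: addr_ge0.
  + by apply: mulr_ge0; [apply: mulr_ge0; [exact: sqr_ge0 | lra] | lra].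
  + by apply: mulr_ge0; [apply: mulr_ge0; [exact: mulr_ge0 (mulr_ge0 _ s0) k0 | lra] | lra].
  + by apply: mulr_ge0; [exact: sqr_ge0 | nra].
Qed.

Lemma eCq_sorted_ge1 u q d z : 0 <= q -> 0 <= d -> 0 <= z -> 0 <= u <= 1 ->
  0 <= eCq (1 + u) (z + q + d) (z + q) z.
Proof.
move=> q0 d0 z0 /andP[u0 u1].
have u2 : u^+2 <= u by rewrite expr2; nra.
have u3 : u^+3 <= u by rewrite exprS; nra.
have u4 : u^+4 <= u by rewrite exprS; nra.
have w0 : 0 <= 2*q + d by lra.
have s0 : 0 <= d^+2 := sqr_ge0 d.
have k0 : 0 <= (q + d)*q by apply: mulr_ge0 => //; lra.
set w := 2*q + d in w0 *; set s := d^+2 in s0 *; set k := (q + d)*q in k0 *.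
pose c2 := u^+2 * (s + k).
pose c1 := u * w * (-2*s + (u^+2 + 1)*k).
pose c0 := d^+4 + (2 - u^+2)*q*d^+3 + (3 + 2*u - 4*u^+2)*q^+2*d^+2
  + (2 + 8*u - 2*u^+2)*q^+3*d + (1 + u)^+2*q^+4.
have -> : eCq (1 + u) (z + q + d) (z + q) z
    = z*(c2*z^+2 + c1*z + c0) + w*(s + (1 - u)*k)*(d - u*z)^+2.
  by rewrite /eCq /quintic /c2 /c1 /c0 /w /s /k; ring.
have disc : 4*c2*c0 - c1^+2 = u^+2 * (q^+2*d^+4*(27 + 8*u - 2*u^+2 - u^+4)
    + q^+3*d^+3*(54 + 40*u - 8*u^+2 - 6*u^+4) + q^+4*d^+2*(27 + 48*u - 30*u^+2 - 13*u^+4)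
    + q^+5*d*u*(40 - 28*u - 12*u^+3) + q^+6*u*(8 - 4*u - 4*u^+3)).
  by rewrite /c2 /c1 /c0 /w /s /k; ring.
subst c0 c1 c2; clearbody w s k.
apply: addr_ge0; last first.
  apply: mulr_ge0; last exact: sqr_ge0.
  by apply: mulr_ge0 => //; apply: addr_ge0 => //; apply: mulr_ge0 => //; lra.
apply: mulr_ge0 => //; apply: quadratic_ge0.
- exact: mulr_ge0 (sqr_ge0 _) (addr_ge0 s0 k0).
- have h1 : 0 <= 2 - u^+2 by lra.
  have h2 : 0 <= 3 + 2*u - 4*u^+2 by lra.
  have h3 : 0 <= 2 + 8*u - 2*u^+2 by lra.
  by repeat apply: addr_ge0; repeat apply: mulr_ge0; rewrite ?exprn_ge0 //; lra.
- rewrite -subr_ge0 disc; apply: mulr_ge0; first exact: sqr_ge0.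
  have h1 : 0 <= 27 + 8*u - 2*u^+2 - u^+4 by lra.
  have h2 : 0 <= 54 + 40*u - 8*u^+2 - 6*u^+4 by lra.
  have h3 : 0 <= 27 + 48*u - 30*u^+2 - 13*u^+4 by lra.
  have h4 : 0 <= 40 - 28*u - 12*u^+3 by lra.
  have h5 : 0 <= 8 - 4*u - 4*u^+3 by lra.
  by repeat apply: addr_ge0; repeat apply: mulr_ge0; rewrite ?exprn_ge0.
Qed.

Lemma eCq_ge0 t x y z :
  0 <= t <= 2 -> 0 <= x -> 0 <= y -> 0 <= z -> 0 <= eCq t x y z.
Proof.
move=> /andP[t0 t2].
have sorted a b c : 0 <= c -> c <= b -> b <= a -> 0 <= eCq t a b c.
  move=> c0 cb ba.
  have -> : eCq t a b c = eCq t (c + (b - c) + (a - b)) (c + (b - c)) c.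
    by congr (eCq t _ _ _); ring.
  have [bc ab] : 0 <= b - c /\ 0 <= a - b by rewrite !subr_ge0.
  have [t1|t1] := lerP t 1; first by apply: eCq_sorted_le1; rewrite ?t0.
  have -> : t = 1 + (t - 1) by ring.
  by apply: eCq_sorted_ge1 => //; apply/andP; lra.
have C12 a b c : eCq t b a c = eCq t a b c by exact: quinticC12.
have C23 a b c : eCq t a c b = eCq t a b c by exact: quinticC23.
move=> x0 y0 z0.
have [yx|xy] := lerP y x; have [zy|yz] := lerP z y; have [zx|xz] := lerP z x.
- exact: sorted.
- lra.
- by rewrite -C23; apply: sorted => //; lra.
- by rewrite -C23 -C12; apply: sorted => //; lra.
- by rewrite -C12; apply: sorted => //; lra.
- by rewrite -C12 -C23; apply: sorted => //; lra.
- lra.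
- by rewrite -C12 -C23 -C12; apply: sorted => //; lra.
Qed.

Lemma eCq_line t x : eCq t x 1 1 = x * (x - 1)^+2 * (x - t)^+2.
Proof. by rewrite /eCq /quintic; ring. Qed.

End Nonnegativity.

Section LocalAnalysis.
Variable R : realFieldType.

Definition horner5 (k0 k1 k2 k3 k4 e : R) : R :=
  k0 + e * (k1 + e * (k2 + e * (k3 + e * k4))).

Lemma horner5_0 (k1 k2 k3 k4 e : R) :
  horner5 0 k1 k2 k3 k4 e = e * horner5 k1 k2 k3 k4 0 e.
Proof. by rewrite /horner5; ring. Qed.

Lemma ler_normDMl (a b e : R) : 0 <= e <= 1 -> `|a + e * b| <= `|a| + `|b|.
Proof.
move=> /andP[e0 e1]; apply: le_trans (ler_normD _ _) _.
by rewrite lerD2l normrM (ger0_norm e0) ler_piMl.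
Qed.

Lemma horner5_ge0_head (k0 k1 k2 k3 k4 : R) :
  (forall e, 0 < e <= 1 -> 0 <= horner5 k0 k1 k2 k3 k4 e) -> 0 <= k0.
Proof.
move=> H; rewrite leNgt; apply/negP => k0_lt0.
pose K := `|k1| + `|k2| + `|k3| + `|k4|.
have K0 : 0 <= K by rewrite /K !addr_ge0.
(* [e] is small enough for [e * K] to be at most [- k0 / 2] *)
pose e := - k0 / (2 * (K - k0 + 1)).
have den0 : 0 < 2 * (K - k0 + 1) by lra.
have eE : e * (2 * (K - k0 + 1)) = - k0 by rewrite mulfVK // gt_eqF.
have e0 : 0 < e by rewrite divr_gt0 //; lra.
have e1 : e <= 1 by nra.
have e01 : 0 <= e <= 1 by rewrite ltW.
have tail : k1 + e * (k2 + e * (k3 + e * k4)) <= K.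
  apply: le_trans (ler_norm _) _; apply: le_trans (ler_normDMl _ _ e01) _.
  rewrite /K -!addrA lerD2l; apply: le_trans (ler_normDMl _ _ e01) _.
  by rewrite lerD2l ler_normDMl.
have := H e; rewrite /horner5 e0 e1 => /(_ isT).
have : e * (k1 + e * (k2 + e * (k3 + e * k4))) <= e * K by rewrite ler_pM2l.
nra.
Qed.

End LocalAnalysis.

Section Line.
Variable R : realFieldType.
Variables a1 a2 a3 a4 a5 : R.

(* [flk x] is the [k]-th Taylor coefficient of [fl] at [x]; after the section
   [fl3] and [fl4] only take the coefficients they depend on. *)
Definition fl (x : R) : R := quintic a1 a2 a3 a4 a5 x 1 1.
Definition fl1 (x : R) : R :=
  5*a1*x^+4 + 8*a2*x^+3 + 3*(2*a3 + a4)*x^+2 + 2*(2*a3 + 2*a5)*x + (2*a2 + 2*a4 + a5).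
Definition fl2 (x : R) : R :=
  10*a1*x^+3 + 12*a2*x^+2 + 3*(2*a3 + a4)*x + (2*a3 + 2*a5).
Definition fl3 (x : R) : R := 10*a1*x^+2 + 8*a2*x + (2*a3 + a4).
Definition fl4 (x : R) : R := 5*a1*x + 2*a2.

Lemma fl_shift x c e : fl (x + c * e) =
  fl x + e * horner5 (c * fl1 x) (c^+2 * fl2 x) (c^+3 * fl3 x) (c^+4 * fl4 x) (c^+5 * a1) e.
Proof. by rewrite /fl /quintic /horner5 /fl1 /fl2 /fl3 /fl4; ring. Qed.

Section Nonnegative.
Hypothesis fl_ge0 : forall x, 0 <= x -> 0 <= fl x.

(* Approaching a zero [x] of [fl] along [x + c e]: [c = 1] from the right,
   [c = - x] from the left. *)
Lemma fl1_sign x c : fl x = 0 ->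
  (forall e, 0 < e <= 1 -> 0 <= x + c * e) -> 0 <= c * fl1 x.
Proof.
move=> fx dom; apply: horner5_ge0_head => e e01; have e0 : 0 < e by case/andP: e01.
have := fl_ge0 (dom e e01); rewrite fl_shift fx add0r pmulr_rge0 //; exact: id.
Qed.

Lemma fl2_sign x c : fl x = 0 -> fl1 x = 0 ->
  (forall e, 0 < e <= 1 -> 0 <= x + c * e) -> 0 <= c^+2 * fl2 x.
Proof.
move=> fx f1x dom; apply: horner5_ge0_head => e e01; have e0 : 0 < e by case/andP: e01.
have := fl_ge0 (dom e e01); rewrite fl_shift fx f1x mulr0 horner5_0 add0r.
by rewrite !pmulr_rge0 //; exact: id.
Qed.

Lemma fl3_sign x c : fl x = 0 -> fl1 x = 0 -> fl2 x = 0 ->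
  (forall e, 0 < e <= 1 -> 0 <= x + c * e) -> 0 <= c^+3 * fl3 x.
Proof.
move=> fx f1x f2x dom; apply: horner5_ge0_head => e e01; have e0 : 0 < e by case/andP: e01.
have := fl_ge0 (dom e e01); rewrite fl_shift fx f1x f2x !mulr0 horner5_0 add0r.
by rewrite horner5_0 !pmulr_rge0 //; exact: id.
Qed.

Lemma fl1_ge0_at_zero x : 0 <= x -> fl x = 0 -> 0 <= fl1 x.
Proof.
move=> x0 fx; rewrite -[fl1 x]mul1r; apply: fl1_sign => // e /andP[e0 _].
by rewrite mul1r addr_ge0 // ltW.
Qed.

Lemma fl2_ge0_at_double_zero x : 0 <= x -> fl x = 0 -> fl1 x = 0 -> 0 <= fl2 x.
Proof.
move=> x0 fx f1x; rewrite -[fl2 x]mul1r -(expr1n _ 2); apply: fl2_sign => // e /andP[e0 _].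
by rewrite mul1r addr_ge0 // ltW.
Qed.

Lemma fl1_eq0_at_root x : 0 < x -> fl x = 0 -> fl1 x = 0.
Proof.
move=> x0 fx; apply/eqP; rewrite eq_le.
have right := fl1_ge0_at_zero (ltW x0) fx.
have left : 0 <= - x * fl1 x by apply: fl1_sign => // e /andP[_ e1]; nra.
by rewrite right andbT; rewrite mulNr oppr_ge0 pmulr_rle0 in left.
Qed.

Lemma fl3_eq0_at_triple_root x : 0 < x -> fl x = 0 -> fl1 x = 0 -> fl2 x = 0 -> fl3 x = 0.
Proof.
move=> x0 fx f1x f2x.
have right : 0 <= 1^+3 * fl3 x by apply: fl3_sign => // e /andP[e0 _]; lra.
have left : 0 <= (- x)^+3 * fl3 x by apply: fl3_sign => // e /andP[_ e1]; nra.
rewrite expr1n mul1r in right.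
rewrite exprNn -signr_odd /= expr1 mulN1r mulNr oppr_ge0 pmulr_rle0 ?exprn_gt0 // in left.
by apply/eqP; rewrite eq_le left right.
Qed.

End Nonnegative.
End Line.

Section Shape.
Variable R : realFieldType.

Definition cubic (c0 c1 c2 c3 x : R) : R := c0 + c1*x + c2*x^+2 + c3*x^+3.
Definition cubic' (c1 c2 c3 x : R) : R := c1 + 2*c2*x + 3*c3*x^+2.

Lemma cubic_double_roots_eq0 (c0 c1 c2 c3 u v : R) : u != v ->
  cubic c0 c1 c2 c3 u = 0 -> cubic' c1 c2 c3 u = 0 ->
  cubic c0 c1 c2 c3 v = 0 -> cubic' c1 c2 c3 v = 0 ->
  [/\ c0 = 0, c1 = 0, c2 = 0 & c3 = 0].
Proof.
rewrite -subr_eq0 => uv qu dqu qv dqv.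
(* divided differences at [u, v], then at [u, u, v] and [u, v, v] *)
have s1 : c1 + c2*(u + v) + c3*(u^+2 + u*v + v^+2) = 0.
  apply: (mulfI uv); rewrite mulr0.
  transitivity (cubic c0 c1 c2 c3 u - cubic c0 c1 c2 c3 v); first by rewrite /cubic; ring.
  by rewrite qu qv subrr.
have s2u : c2 + c3*(2*u + v) = 0.
  apply: (mulfI uv); rewrite mulr0.
  transitivity (cubic' c1 c2 c3 u - (c1 + c2*(u + v) + c3*(u^+2 + u*v + v^+2))).
    by rewrite /cubic'; ring.
  by rewrite dqu s1 subrr.
have s2v : c2 + c3*(u + 2*v) = 0.
  apply: (mulfI uv); rewrite mulr0.
  transitivity (c1 + c2*(u + v) + c3*(u^+2 + u*v + v^+2) - cubic' c1 c2 c3 v).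
    by rewrite /cubic'; ring.
  by rewrite dqv s1 subrr.
have c3_0 : c3 = 0.
  apply: (mulfI uv); rewrite mulr0.
  by transitivity (c2 + c3*(2*u + v) - (c2 + c3*(u + 2*v))); [ring | rewrite s2u s2v subrr].
have c2_0 : c2 = 0 by rewrite c3_0 mul0r addr0 in s2u.
have c1_0 : c1 = 0 by rewrite c2_0 c3_0 !mul0r !addr0 in s1.
by split=> //; move: qu; rewrite /cubic c1_0 c2_0 c3_0 !mul0r !addr0.
Qed.

Definition eC_shape (t a1 a2 a3 a4 a5 : R) : Prop :=
  [/\ a2 = a1 * - (t + 1), a3 = a1 * t, a4 = a1 * (t + 1)^+2 & a5 = a1 * - (t^+2 + 2*t)].

Lemma fl_eC_shape t a1 a2 a3 a4 a5 x : eC_shape t a1 a2 a3 a4 a5 ->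
  fl a1 a2 a3 a4 a5 x = a1 * (x * (x - 1)^+2 * (x - t)^+2).
Proof. by case=> -> -> -> ->; rewrite /fl /quintic; ring. Qed.

Lemma eC_shape_lead_ge0 t a1 a2 a3 a4 a5 : 0 <= t -> eC_shape t a1 a2 a3 a4 a5 ->
  (forall x, 0 <= x -> 0 <= fl a1 a2 a3 a4 a5 x) -> 0 <= a1.
Proof.
move=> t0 shape fl_ge0; have := fl_ge0 (t + 2); rewrite (fl_eC_shape _ shape).
have -> : (t + 2) * (t + 2 - 1)^+2 * (t + 2 - t)^+2 = 4 * (t + 2) * (t + 1)^+2 by ring.
have pos : 0 < 4 * (t + 2) * (t + 1)^+2 by rewrite !mulr_gt0 ?exprn_gt0 //; lra.
by rewrite pmulr_lge0 // => /(_ _); apply; lra.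
Qed.

(* Writing [b_i] for the deviations of [a_i] from the shape, [fl x] is
   [a1 x (x - 1)^2 (x - t)^2 + 2 (b2 + b3) + x q(x)] for a cubic [q], and the
   hypotheses give [q] double roots at [1] and [t]. *)
Lemma eC_shape_of_roots t a1 a2 a3 a4 a5 : t != 0 -> t != 1 ->
  fl a1 a2 a3 a4 a5 0 = 0 -> fl a1 a2 a3 a4 a5 1 = 0 -> fl1 a1 a2 a3 a4 a5 1 = 0 ->
  fl a1 a2 a3 a4 a5 t = 0 -> fl1 a1 a2 a3 a4 a5 t = 0 -> eC_shape t a1 a2 a3 a4 a5.
Proof.
move=> t0 t1 f0 f1 d1 ft dt.
pose b2 := a2 - a1 * - (t + 1); pose b3 := a3 - a1 * t.
pose b4 := a4 - a1 * (t + 1)^+2; pose b5 := a5 - a1 * - (t^+2 + 2*t).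
pose c0 := 2*b2 + 2*b4 + b5; pose c1 := 2*b3 + 2*b5; pose c2 := 2*b3 + b4; pose c3 := 2*b2.
have qt : cubic c0 c1 c2 c3 t = 0.
  apply: (mulfI t0); rewrite mulr0.
  transitivity (fl a1 a2 a3 a4 a5 t - fl a1 a2 a3 a4 a5 0); last by rewrite ft f0 subrr.
  by rewrite /fl /quintic /cubic /c0 /c1 /c2 /c3 /b2 /b3 /b4 /b5; ring.
have [] : [/\ c0 = 0, c1 = 0, c2 = 0 & c3 = 0].
  apply: (cubic_double_roots_eq0 (u := 1) (v := t)) => //.
  - by rewrite eq_sym.
  - transitivity (fl a1 a2 a3 a4 a5 1 - fl a1 a2 a3 a4 a5 0); last by rewrite f1 f0 subrr.
    by rewrite /fl /quintic /cubic /c0 /c1 /c2 /c3 /b2 /b3 /b4 /b5; ring.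
  - transitivity (fl1 a1 a2 a3 a4 a5 1 - fl a1 a2 a3 a4 a5 1 + fl a1 a2 a3 a4 a5 0).
      by rewrite /fl /fl1 /quintic /cubic' /c1 /c2 /c3 /b2 /b3 /b4 /b5; ring.
    by rewrite d1 f1 f0 subrr addr0.
  - apply: (mulfI t0); rewrite mulr0.
    transitivity (fl1 a1 a2 a3 a4 a5 t - cubic c0 c1 c2 c3 t); last by rewrite dt qt subrr.
    by rewrite /fl1 /cubic /cubic' /c0 /c1 /c2 /c3 /b2 /b3 /b4 /b5; ring.
rewrite /c0 /c1 /c2 /c3 /b2 /b3 /b4 /b5 => e0 e1 e2 e3.
by move: f0; rewrite /fl /quintic => f0; split; lra.
Qed.

Lemma eC_shape0 a1 a2 a3 a4 a5 :
  fl a1 a2 a3 a4 a5 0 = 0 -> fl1 a1 a2 a3 a4 a5 0 = 0 -> fl2 a1 a2 a3 a4 a5 0 = 0 ->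
  fl a1 a2 a3 a4 a5 1 = 0 -> fl1 a1 a2 a3 a4 a5 1 = 0 -> eC_shape 0 a1 a2 a3 a4 a5.
Proof. by rewrite /fl /fl1 /fl2 /quintic => *; split; lra. Qed.

Lemma eC_shape1 a1 a2 a3 a4 a5 :
  fl a1 a2 a3 a4 a5 0 = 0 -> fl a1 a2 a3 a4 a5 1 = 0 -> fl1 a1 a2 a3 a4 a5 1 = 0 ->
  fl2 a1 a2 a3 a4 a5 1 = 0 -> fl3 a1 a2 a3 a4 1 = 0 -> eC_shape 1 a1 a2 a3 a4 a5.
Proof. by rewrite /fl /fl1 /fl2 /fl3 /quintic => *; split; lra. Qed.

End Shape.

Definition mnm3 (i j k : nat) : 'X_{1..3} := [multinom [tuple i; j; k]].

Lemma mnm3E (m : 'X_{1..3}) : m = mnm3 (m 0) (m 1) (m 2).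
Proof. by apply/mnmP => l; case: (ord3P l) => ->. Qed.

Lemma mnm3_coord i j k : [/\ mnm3 i j k 0 = i, mnm3 i j k 1 = j & mnm3 i j k 2 = k].
Proof. by []. Qed.

Lemma eq_mnm3 i j k i' j' k' : (mnm3 i j k == mnm3 i' j' k') = [&& i == i', j == j' & k == k'].
Proof.
apply/eqP/and3P => [E|[/eqP-> /eqP-> /eqP->]] //.
have coord (l : 'I_3) := congr1 (fun m : 'X_{1..3} => m l) E.
move: (coord 0) (coord 1) (coord 2).
by have [-> -> ->] := mnm3_coord i j k; have [-> -> ->] := mnm3_coord i' j' k' => -> -> ->.
Qed.

Lemma mdeg_mnm3 i j k : mdeg (mnm3 i j k) = (i + j + k)%N.
Proof. by rewrite mdegE !big_ord_recr big_ord0. Qed.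

Definition mnm3_sort (i j k : nat) : 'X_{1..3} :=
  if (j <= i)%N then
    if (k <= j)%N then mnm3 i j k else if (k <= i)%N then mnm3 i k j else mnm3 k i j
  else
    if (k <= i)%N then mnm3 j i k else if (k <= j)%N then mnm3 j k i else mnm3 k j i.

Section SymmetricQuintics.
Variable R : realType.
Local Notation mon i j k := ('X_[mnm3 i j k] : {mpoly R[3]}).

Lemma mon_vabc i j k : mon i j k = va R ^+ i * vb R ^+ j * vc R ^+ k.
Proof. by rewrite mpolyXE_id !big_ord_recr big_ord0 /= mul1r. Qed.

Lemma ev3_mon i j k x y z : ev3 (mon i j k) x y z = x ^+ i * y ^+ j * z ^+ k.
Proof. by rewrite /ev3 mevalX !big_ord_recr big_ord0 /= mul1r. Qed.

Lemma mderiv0_mon i j k : (mon i j k)^`M(0) = i%:R *: mon i.-1 j k.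
Proof.
rewrite mderivX; congr (_ *: 'X_[_]).
by apply/mnmP => l; rewrite mnmBE mnm1E; case: (ord3P l) => -> /=; rewrite ?subn0 ?subn1.
Qed.

Lemma coef_mnm3_sort (f : {mpoly R[3]}) i j k :
  f \is symmetric -> f@_(mnm3 i j k) = f@_(mnm3_sort i j k).
Proof.
move=> fsym.
have permute (s : 'S_3) i' j' k' m : m = mnm3 i' j' k' ->
    f@_m = f@_(mnm3 (m (s 0)) (m (s 1)) (m (s 2))).
  move=> ->; rewrite -(msym_coeff _ s fsym); congr (_@__).
  by apply/mnmP => l; rewrite mnmE; case: (ord3P l) => ->.
have swap01 i' j' k' : f@_(mnm3 i' j' k') = f@_(mnm3 j' i' k').
  by rewrite (permute (tperm 0 1) i' j' k') // !permE.
have swap12 i' j' k' : f@_(mnm3 i' j' k') = f@_(mnm3 i' k' j').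
  by rewrite (permute (tperm 1 2) i' j' k') // !permE.
rewrite /mnm3_sort; case: leqP => _; case: leqP => _; try case: leqP => _.
all: first [ done | by rewrite swap12 | by rewrite swap01 | by rewrite swap12 swap01
           | by rewrite swap01 swap12 | by rewrite swap01 swap12 swap01 ].
Qed.

Definition mquintic (a1 a2 a3 a4 a5 : R) : {mpoly R[3]} :=
  quintic a1%:MP a2%:MP a3%:MP a4%:MP a5%:MP (va R) (vb R) (vc R).

Lemma mquinticE a1 a2 a3 a4 a5 : mquintic a1 a2 a3 a4 a5 =
    a1 *: (mon 5 0 0 + mon 0 5 0 + mon 0 0 5)
  + a2 *: (mon 4 1 0 + mon 4 0 1 + mon 1 4 0 + mon 0 4 1 + mon 1 0 4 + mon 0 1 4)
  + a3 *: (mon 3 2 0 + mon 3 0 2 + mon 2 3 0 + mon 0 3 2 + mon 2 0 3 + mon 0 2 3)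
  + a4 *: (mon 3 1 1 + mon 1 3 1 + mon 1 1 3)
  + a5 *: (mon 2 2 1 + mon 2 1 2 + mon 1 2 2).
Proof. by rewrite /mquintic /quintic !mon_vabc -!mul_mpolyC; ring. Qed.

Lemma ev3_mquintic a1 a2 a3 a4 a5 x y z :
  ev3 (mquintic a1 a2 a3 a4 a5) x y z = quintic a1 a2 a3 a4 a5 x y z.
Proof.
by rewrite /ev3 /mquintic rmorph_quintic /= !mevalC !mevalXU.
Qed.

Lemma mquintic_homog a1 a2 a3 a4 a5 : mquintic a1 a2 a3 a4 a5 \is 5.-homog.
Proof.
rewrite mquinticE; do ![apply: rpredD | apply: rpredZ].
all: by rewrite dhomogX /= mdeg_mnm3.
Qed.

Lemma mquintic_sym a1 a2 a3 a4 a5 : mquintic a1 a2 a3 a4 a5 \is symmetric.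
Proof.
have msymC (s : 'S_3) c : msym s c%:MP = c%:MP :> {mpoly R[3]}.
  by rewrite -[c%:MP]mulr1 mul_mpolyC msymZ msym1.
have msymX (s : 'S_3) i : msym s 'X_i = 'X_(s i) :> {mpoly R[3]}.
  rewrite msymX; congr 'X_[_]; apply/mnmP => l; rewrite mnmE !mnm1E.
  by congr nat_of_bool; apply/eqP/eqP => [->|<-]; rewrite ?permKV ?permK.
apply/issymP => s; rewrite /mquintic rmorph_quintic /= !msymC !msymX.
exact: (quintic_perm _ _ _ _ _ (fun i => 'X_i)).
Qed.

Lemma Hs35_mquintic f : Hs35 f -> f = mquintic (f@_(mnm3 5 0 0)) (f@_(mnm3 4 1 0))
  (f@_(mnm3 3 2 0)) (f@_(mnm3 3 1 1)) (f@_(mnm3 2 2 1)).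
Proof.
case=> fsym fhom; apply/mpolyP => m.
have [/eqP deg5|deg] := eqVneq (mdeg m) 5%N; last first.
  by rewrite !(dhomog_nemf_coeff _ deg) // mquintic_homog.
rewrite (mnm3E m) in deg5 *; move: (m 0) (m 1) (m 2) deg5 => i j k; rewrite mdeg_mnm3.
rewrite coef_mnm3_sort // mquinticE !(mcoeffD, mcoeffZ, mcoeffX) !eq_mnm3.
case: i => [|[|[|[|[|[|i]]]]]]; case: j => [|[|[|[|[|[|j]]]]]];
  case: k => [|[|[|[|[|[|k]]]]]] => //= _.
all: by rewrite /mnm3_sort /= ?(mulr0, mulr1, addr0, add0r).
Qed.

Lemma ev3_d_a_mquintic a1 a2 a3 a4 a5 x :
  ev3 (d_a (mquintic a1 a2 a3 a4 a5)) x 1 1 = fl1 a1 a2 a3 a4 a5 x.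
Proof.
rewrite /d_a mquinticE !(mderivD, mderivZ) !mderiv0_mon /ev3 !(mevalD, mevalZ).
by rewrite -!/(ev3 _ x 1 1) !ev3_mon /fl1; ring.
Qed.

Lemma ev3_d_aa_mquintic a1 a2 a3 a4 a5 x :
  ev3 (d_aa (mquintic a1 a2 a3 a4 a5)) x 1 1 = 2 * fl2 a1 a2 a3 a4 a5 x.
Proof.
rewrite /d_aa /d_a mquinticE !(mderivD, mderivZ) !mderiv0_mon /=.
rewrite !(mderivD, mderivZ) !mderiv0_mon.
by rewrite /ev3 !(mevalD, mevalZ) -!/(ev3 _ x 1 1) !ev3_mon /fl2; ring.
Qed.

Lemma eC_mquintic t : eC t = mquintic 1 (- (t + 1)) t ((t + 1)^+2) (- (t^+2 + 2*t)).
Proof.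
rewrite /eC /s0 /s1 /s2 /s3 /Sn /Tmn /Smn /U3 /mquintic /quintic -!mul_mpolyC.
by rewrite !(mpolyCN, mpolyCD, mpolyCM, mpolyC1, mpolyC_nat); ring.
Qed.

Lemma mquintic_scale l a1 a2 a3 a4 a5 :
  mquintic (l * a1) (l * a2) (l * a3) (l * a4) (l * a5) = l *: mquintic a1 a2 a3 a4 a5.
Proof. by rewrite /mquintic /quintic -!mul_mpolyC !mpolyCM; ring. Qed.

End SymmetricQuintics.

Section Cone.
Variable R : realType.
Implicit Types (f g h : {mpoly R[3]}) (t x : R).

Lemma ev3_mquintic_line a1 a2 a3 a4 a5 x :
  ev3 (mquintic a1 a2 a3 a4 a5) x 1 1 = fl a1 a2 a3 a4 a5 x.
Proof. exact: ev3_mquintic. Qed.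

Lemma Ps35_mquinticP f : Ps35 f ->
  exists a1 a2 a3 a4 a5, f = mquintic a1 a2 a3 a4 a5 /\
    forall x, 0 <= x -> 0 <= fl a1 a2 a3 a4 a5 x.
Proof.
case=> hf f_ge0; rewrite (Hs35_mquintic hf); do 5!eexists; split; first by [].
by move=> x x0; rewrite -ev3_mquintic_line -(Hs35_mquintic hf) f_ge0.
Qed.

Lemma ev3_eC t x y z : ev3 (eC t) x y z = eCq t x y z.
Proof. by rewrite eC_mquintic ev3_mquintic. Qed.

Lemma Ps35_eC t : 0 <= t <= 2 -> Ps35 (eC t).
Proof.
move=> t02; rewrite eC_mquintic; split.
  by split; [exact: mquintic_sym | exact: mquintic_homog].
by move=> x y z x0 y0 z0; rewrite ev3_mquintic; exact: eCq_ge0.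
Qed.

Lemma eC_neq0 t : 0 <= t -> eC t != 0.
Proof.
move=> t0; apply/eqP => eC0.
have : 0 < eCq t (t + 2) 1 1.
  by rewrite eCq_line !mulr_gt0 ?exprn_gt0 //; lra.
by rewrite -ev3_eC eC0 /ev3 meval0 ltxx.
Qed.

Lemma mquintic_eC_shape t a1 a2 a3 a4 a5 :
  eC_shape t a1 a2 a3 a4 a5 -> mquintic a1 a2 a3 a4 a5 = a1 *: eC t.
Proof. by case=> -> -> -> ->; rewrite eC_mquintic -mquintic_scale mulr1. Qed.

Lemma Ps35_eC_multiple t a1 a2 a3 a4 a5 : 0 <= t -> eC_shape t a1 a2 a3 a4 a5 ->
  (forall x, 0 <= x -> 0 <= fl a1 a2 a3 a4 a5 x) ->
  exists l, 0 <= l /\ mquintic a1 a2 a3 a4 a5 = l *: eC t.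
Proof.
move=> t0 shape ge0; exists a1.
by split; [exact: eC_shape_lead_ge0 shape ge0 | exact: mquintic_eC_shape].
Qed.

Lemma Ps35_d_a_ge0 f x : Ps35 f -> 0 <= x -> ev3 f x 1 1 = 0 -> 0 <= ev3 (d_a f) x 1 1.
Proof.
move=> /Ps35_mquinticP[a1 [a2 [a3 [a4 [a5 [-> ge0]]]]]].
by rewrite ev3_mquintic_line ev3_d_a_mquintic; exact: fl1_ge0_at_zero.
Qed.

Lemma Ps35_d_a_eq0 f x : Ps35 f -> 0 < x -> ev3 f x 1 1 = 0 -> ev3 (d_a f) x 1 1 = 0.
Proof.
move=> /Ps35_mquinticP[a1 [a2 [a3 [a4 [a5 [-> ge0]]]]]].
by rewrite ev3_mquintic_line ev3_d_a_mquintic; exact: fl1_eq0_at_root.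
Qed.

Lemma Ps35_d_aa_ge0 f x : Ps35 f -> 0 <= x -> ev3 f x 1 1 = 0 -> ev3 (d_a f) x 1 1 = 0 ->
  0 <= ev3 (d_aa f) x 1 1.
Proof.
move=> /Ps35_mquinticP[a1 [a2 [a3 [a4 [a5 [-> ge0]]]]]].
rewrite ev3_mquintic_line ev3_d_a_mquintic ev3_d_aa_mquintic => x0 fx f1x.
by rewrite mulr_ge0 //; exact: fl2_ge0_at_double_zero.
Qed.

Lemma Ps35_eC_of_roots t f : 0 < t -> t != 1 -> Ps35 f ->
  ev3 f t 1 1 = 0 -> ev3 f 1 1 1 = 0 -> ev3 f 0 1 1 = 0 ->
  exists l, 0 <= l /\ f = l *: eC t.
Proof.
move=> t0 t1 /Ps35_mquinticP[a1 [a2 [a3 [a4 [a5 [-> ge0]]]]]].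
rewrite !ev3_mquintic_line => ft f1 f0.
suff shape : eC_shape t a1 a2 a3 a4 a5 by exact: Ps35_eC_multiple (ltW t0) shape ge0.
apply: eC_shape_of_roots => //.
- by rewrite gt_eqF.
- exact: (fl1_eq0_at_root ge0 ltr01 f1).
- exact: (fl1_eq0_at_root ge0 t0 ft).
Qed.

Lemma Ps35_eC0 f : Ps35 f -> ev3 f 1 1 1 = 0 -> ev3 f 0 1 1 = 0 ->
  ev3 (d_a f) 0 1 1 = 0 -> ev3 (d_aa f) 0 1 1 = 0 ->
  exists l, 0 <= l /\ f = l *: eC 0.
Proof.
move=> /Ps35_mquinticP[a1 [a2 [a3 [a4 [a5 [-> ge0]]]]]].
rewrite !ev3_mquintic_line ev3_d_a_mquintic ev3_d_aa_mquintic => f1 f0 d1 d2.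
suff shape : eC_shape 0 a1 a2 a3 a4 a5 by exact: Ps35_eC_multiple (lexx 0) shape ge0.
apply: eC_shape0 => //; first lra.
exact: (fl1_eq0_at_root ge0 ltr01 f1).
Qed.

Lemma Ps35_eC1 f : Ps35 f -> ev3 f 0 1 1 = 0 -> ev3 f 1 1 1 = 0 -> ev3 (d_aa f) 1 1 1 = 0 ->
  exists l, 0 <= l /\ f = l *: eC 1.
Proof.
move=> /Ps35_mquinticP[a1 [a2 [a3 [a4 [a5 [-> ge0]]]]]].
rewrite !ev3_mquintic_line ev3_d_aa_mquintic => f0 f1 d2.
have d1 := fl1_eq0_at_root ge0 ltr01 f1.
have {}d2 : fl2 a1 a2 a3 a4 a5 1 = 0 by lra.
suff shape : eC_shape 1 a1 a2 a3 a4 a5 by exact: Ps35_eC_multiple ler01 shape ge0.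
apply: eC_shape1 => //.
exact: (fl3_eq0_at_triple_root ge0 ltr01 f1 d1 d2).
Qed.

(* The hypotheses of [Ps35_eC_of_roots], [Ps35_eC0] and [Ps35_eC1] are zeros,
   or vanishing derivatives at zeros, of [x |-> eC t (x, 1, 1)]; at such a point
   the corresponding quantities of both summands are nonnegative, so both vanish. *)
Lemma eC_summand t g h : 0 <= t -> Ps35 g -> Ps35 h -> eC t = g + h ->
  exists l, 0 <= l /\ g = l *: eC t.
Proof.
move=> t0 Pg Ph E.
have share (D : {mpoly R[3]} -> {mpoly R[3]}) x : {morph D : p q / p + q} ->
    0 <= ev3 (D g) x 1 1 -> 0 <= ev3 (D h) x 1 1 -> ev3 (D (eC t)) x 1 1 = 0 ->
    ev3 (D g) x 1 1 = 0 /\ ev3 (D h) x 1 1 = 0.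
  move=> DD Dg Dh; rewrite E DD /ev3 mevalD => /eqP; rewrite paddr_eq0 //.
  by case/andP=> /eqP-> /eqP->.
have idD : {morph id : p q / p + q : {mpoly R[3]}} by [].
have d_aD : {morph @d_a R : p q / p + q} by move=> p q; rewrite /d_a mderivD.
have d_aaD : {morph @d_aa R : p q / p + q} by move=> p q; rewrite /d_aa /d_a !mderivD.
have zero x : 0 <= x -> x * (x - 1)^+2 * (x - t)^+2 = 0 ->
    ev3 g x 1 1 = 0 /\ ev3 h x 1 1 = 0.
  move=> x0 ex; apply: share idD _ _ _; [exact: Pg.2 | exact: Ph.2 |].
  by rewrite /= ev3_eC eCq_line.
have [g0 h0] := zero 0 (lexx 0) ltac:(ring).
have [g1 h1] := zero 1 ler01 ltac:(ring).
have [t_eq0|t_neq0] := eqVneq t 0.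
  subst t.
  have [ga0 ha0] := share _ 0 d_aD (Ps35_d_a_ge0 Pg (lexx 0) g0) (Ps35_d_a_ge0 Ph (lexx 0) h0)
    ltac:(by rewrite eC_mquintic ev3_d_a_mquintic /fl1; ring).
  have [gaa0 _] := share _ 0 d_aaD
    (Ps35_d_aa_ge0 Pg (lexx 0) g0 ga0) (Ps35_d_aa_ge0 Ph (lexx 0) h0 ha0)
    ltac:(by rewrite eC_mquintic ev3_d_aa_mquintic /fl2; ring).
  exact: Ps35_eC0.
have [t_eq1|t_neq1] := eqVneq t 1.
  subst t.
  have [ga1 ha1] := (Ps35_d_a_eq0 Pg ltr01 g1, Ps35_d_a_eq0 Ph ltr01 h1).
  have [gaa1 _] := share _ 1 d_aaD
    (Ps35_d_aa_ge0 Pg ler01 g1 ga1) (Ps35_d_aa_ge0 Ph ler01 h1 ha1)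
    ltac:(by rewrite eC_mquintic ev3_d_aa_mquintic /fl2; ring).
  exact: Ps35_eC1.
have t_gt0 : 0 < t by rewrite lt_def t_neq0.
have [gt _] := zero t t0 ltac:(ring).
exact: Ps35_eC_of_roots.
Qed.

Lemma eC_extremal t : 0 <= t <= 2 -> extremal (@Ps35 R) (eC t).
Proof.
move=> t02; have t0 : 0 <= t by case/andP: t02.
split; first exact: Ps35_eC.
split; first exact: eC_neq0.
move=> g h Pg Ph E; split; first exact: eC_summand E.
by apply: eC_summand Ph Pg _; rewrite // E addrC.
Qed.

End Cone.

Theorem theorem4p3 (R : realType) :
  (* (1) *)
  (forall t : R, 0 <= t <= 2%:R -> extremal (@Ps35 R) (eC t)) /\
  (* (2) *)
  (forall (t : R) (f : {mpoly R[3]}), 0 < t <= 2%:R -> t != 1 ->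
     Ps35 f -> ev3 f t 1 1 = 0 -> ev3 f 1 1 1 = 0 -> ev3 f 0 1 1 = 0 ->
     exists l : R, 0 <= l /\ f = l *: eC t) /\
  (* (3) *)
  (forall f : {mpoly R[3]},
     Ps35 f -> ev3 f 1 1 1 = 0 -> ev3 f 0 1 1 = 0 ->
     ev3 (d_a f) 0 1 1 = 0 -> ev3 (d_aa f) 0 1 1 = 0 ->
     exists l : R, 0 <= l /\ f = l *: eC 0) /\
  (* (4) *)
  (forall f : {mpoly R[3]},
     Ps35 f -> ev3 f 0 1 1 = 0 -> ev3 f 1 1 1 = 0 -> ev3 (d_aa f) 1 1 1 = 0 ->
     exists l : R, 0 <= l /\ f = l *: eC 1).
Proof.
split; [exact: eC_extremal | split; [|split]].
- by move=> t f /andP[t0 _]; exact: Ps35_eC_of_roots.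
- exact: Ps35_eC0.
- exact: Ps35_eC1.
Qed.
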